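(* For every $n\ge 2$, the sensitivity to synchronism of elementary cellular automaton rule $170$ satisfies $\mu(f_{170,n})=\dfrac{2^n-1}{3^n-2^{n+1}+2}$.
   Context: Cells are indexed by $\mathbb{Z}_n=\{0,\dots,n-1\}$, indices modulo $n$. Rule $170$ has local rule $r_{170}(x_1,x_2,x_3)=x_3$ and global function $f_{170,n}(x)_i=r_{170}(x_{i-1},x_i,x_{i+1})=x_{i+1}$. An update schedule is an ordered partition $\Delta=(\Delta_1,\dots,\Delta_k)$ of $\mathbb{Z}_n$ into nonempty blocks; $\mathcal{P}_n$ is the set of them. For a block $B$ let $f^{(B)}(x)_i=f_{170,n}(x)_i$ if $i\in B$ and $x_i$ otherwise; $f^{(\Delta)}_{170,n}=f^{(\Delta_k)}\circ\cdots\circ f^{(\Delta_1)}$. The dynamics of $\Delta$ is the transition digraph with arcs $(x,f^{(\Delta)}_{170,n}(x))$; $\mathcal{D}(f_{170,n})$ is the set of distinct dynamics over $\Delta\in\mathcal{P}_n$. The sensitivity to synchronism is $\mu(f_{170,n})=|\mathcal{D}(f_{170,n})|/(3^n-2^{n+1}+2)$. *)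

From mathcomp Require Import all_boot all_order all_algebra.
From mathcomp Require Import boolp.
Set Implicit Arguments. Unset Strict Implicit. Unset Printing Implicit Defensive.

(* Configurations on the ring Z_n : cells 'I_n, successor/predecessor mod n. *)
Definition config (n : nat) := {ffun 'I_n -> bool}.

Definition r170 (x1 x2 x3 : bool) : bool := x3.

Definition f170 (n : nat) (x : config n) : config n :=
  [ffun i => r170 (x (ord_pred i)) (x i) (x (ordS i))].

Definition is_schedule (n : nat) (D : seq {set 'I_n}) : bool :=
  [&& all (fun B => B != set0) D,
      pairwise (fun A B : {set 'I_n} => [disjoint A & B]) D &
      \bigcup_(B <- D) B == [set: 'I_n]].

Definition block_upd (n : nat) (B : {set 'I_n}) (x : config n) : config n :=
  [ffun i => if i \in B then f170 x i else x i].

Definition sched_fun (n : nat) (D : seq {set 'I_n}) (x : config n) : config n :=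
  foldl (fun y B => block_upd B y) x D.

Definition dynamics (n : nat) (D : seq {set 'I_n}) : {ffun config n -> config n} :=
  [ffun x => sched_fun D x].

Definition dyn_set (n : nat) : {set {ffun config n -> config n}} :=
  [set g | `[< exists D, is_schedule D /\ g = dynamics D >]].

Definition mu170 (n : nat) : rat :=
  (#|dyn_set n|%:R / ((3 ^ n)%:R - (2 ^ n.+1)%:R + 2))%R.

(* Cell i of rule 170 only reads cell i+1, so after a sequential update the
   value of cell i is the initial value of a single cell, its source P i.  Let S
   be the set of cells whose successor is updated strictly before them; then
   P i = P (i+1) for i in S and P i = i+1 otherwise.  The block updated first
   is disjoint from S, so S is a proper subset of Z_n; for a proper S these
   equations determine P, and S is recovered from P as {i | P i <> i+1}, since
   following the equations from i ends at i+1 only if i is outside S.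
   Conversely every proper S arises, by updating cells in the order of the
   number of cells of S met on the way to a fixed cell outside S.  Hence the
   dynamics correspond exactly to the 2^n - 1 proper subsets of Z_n. *)

From mathcomp Require Import all_boot all_order all_algebra.
From mathcomp Require Import boolp zify.
Set Implicit Arguments. Unset Strict Implicit. Unset Printing Implicit Defensive.

Section Cycle.

Variable n : nat.
Implicit Types (c i j : 'I_n) (S : {set 'I_n}).

Lemma val_ordS i : ordS i = (if i.+1 < n then i.+1 else 0) :> nat.
Proof.
rewrite /ordS /=; case: ltnP => [lt_in | le_ni]; first by rewrite modn_small.
suff -> : i.+1 = n by rewrite modnn.
by apply/eqP; rewrite eqn_leq le_ni ltn_ord.
Qed.

Definition fwd_dist c j : nat := if c <= j then j - c else n - c + j.

Lemma fwd_dist_lt c j : fwd_dist c j < n.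
Proof. by rewrite /fwd_dist; have := ltn_ord c; have := ltn_ord j; case: (leqP c j); lia. Qed.

Lemma fwd_dist_eq0 c j : (fwd_dist c j == 0) = (c == j).
Proof.
rewrite /fwd_dist -val_eqE /=; have := ltn_ord c; have := ltn_ord j.
by case: (leqP c j) => ? ? ?; apply/eqP/eqP; lia.
Qed.

Lemma fwd_distS c j : c != j -> fwd_dist c j = (fwd_dist (ordS c) j).+1.
Proof.
rewrite /fwd_dist !val_ordS -val_eqE /=; have := ltn_ord c; have := ltn_ord j.
by case: (ltnP c.+1 n); case: (leqP c j); case: (ltnP c j); rewrite ?leq0n ?subn0; lia.
Qed.

Lemma ordS_ind j (Q : 'I_n -> Prop) :
  Q j -> (forall c, Q (ordS c) -> Q c) -> forall c, Q c.
Proof.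
move=> Qj QS c; move Edist: (fwd_dist c j) => m.
elim: m c Edist => [|m IHm] c dist_c.
  by move/eqP: dist_c; rewrite fwd_dist_eq0 => /eqP ->.
have neq_cj : c != j by rewrite -fwd_dist_eq0 dist_c.
by apply/QS/IHm/succn_inj; rewrite -fwd_distS.
Qed.

Definition source_spec S (P : 'I_n -> 'I_n) :=
  forall i, P i = if i \in S then P (ordS i) else ordS i.

Lemma exists_notin S : S != setT -> exists j, j \notin S.
Proof. by rewrite -subTset => /subsetPn[j _ notSj]; exists j. Qed.

Lemma source_spec_uniq S P P' :
  S != setT -> source_spec S P -> source_spec S P' -> P =1 P'.
Proof.
move=> /exists_notin[j notSj] PS P'S; apply: (ordS_ind (j := j)).
  by rewrite PS P'S (negbTE notSj).
by move=> c eq_next; rewrite PS P'S eq_next.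
Qed.

Lemma mem_source_spec S P i :
  S != setT -> source_spec S P -> (i \in S) = (P i != ordS i).
Proof.
move=> /exists_notin[j notSj] PS.
have P_exit c : exists2 d, d \notin S & P c = ordS d.
  elim/(ordS_ind (j := j)): c => [|c [d notSd eq_next]].
    by exists j; rewrite // PS (negbTE notSj).
  by rewrite PS; case: ifPn => [_|notSc]; [exists d | exists c].
rewrite PS; case: ifPn => [Si|_]; last by rewrite eqxx.
have [d notSd ->] := P_exit (ordS i).
by apply/esym/(contraNneq _ notSd) => /ordS_inj ->.
Qed.

End Cycle.

Section Schedules.

Variable n : nat.
Implicit Types (c i : 'I_n) (B S : {set 'I_n}) (D : seq {set 'I_n}).

Definition block_source B i : 'I_n := if i \in B then ordS i else i.

Definition source D i : 'I_n := foldr block_source i D.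

Lemma sched_fun_source D x : sched_fun D x = [ffun i => x (source D i)].
Proof.
elim: D x => [|B D IHD] x; first by apply/ffunP => i; rewrite ffunE.
rewrite /sched_fun /= -/(sched_fun D _) IHD.
by apply/ffunP => i; rewrite !ffunE /block_source; case: ifP.
Qed.

Lemma dynamics_source D D' : source D =1 source D' -> dynamics D = dynamics D'.
Proof.
move=> eq_src; apply/ffunP => x; rewrite !ffunE !sched_fun_source.
by apply/ffunP => i; rewrite !ffunE eq_src.
Qed.

(* Probing with the indicator of cell i+1 tells whether cell i reads it, so
   [dyn_labels] recovers the labels of a schedule from its dynamics alone. *)
Definition dyn_labels (g : {ffun config n -> config n}) : {set 'I_n} :=
  [set i | ~~ g [ffun c => c == ordS i] i].

Lemma dyn_labels_dynamics D : dyn_labels (dynamics D) = [set i | source D i != ordS i].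
Proof. by apply/setP => i; rewrite !inE !ffunE sched_fun_source !ffunE. Qed.

Lemma dyn_labels_source_spec S D :
  S != setT -> source_spec S (source D) -> dyn_labels (dynamics D) = S.
Proof.
move=> properS srcD; apply/setP => i.
by rewrite dyn_labels_dynamics inE (mem_source_spec _ properS srcD).
Qed.

Definition blocks (rk : 'I_n -> nat) (m : nat) : seq {set 'I_n} :=
  [seq [set c | rk c == k] | k <- iota 0 m].

Lemma source_blocks rk m i :
  source (blocks rk m) i =
    if rk i < m then (if rk (ordS i) < rk i then source (blocks rk m) (ordS i) else ordS i)
    else i.
Proof.
elim: m i => [//|m IHm] i.
have blocksS : blocks rk m.+1 = rcons (blocks rk m) [set c | rk c == m].
  by rewrite /blocks -addn1 iotaD map_cat cats1.
have sourceS c :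
    source (blocks rk m.+1) c = source (blocks rk m) (block_source [set c | rk c == m] c).
  by rewrite blocksS /source foldr_rcons.
have source_old c : rk c != m -> source (blocks rk m.+1) c = source (blocks rk m) c.
  by move=> rkc; rewrite sourceS /block_source inE (negbTE rkc).
have source_late c : m <= rk c -> source (blocks rk m) c = c.
  by move=> le_m_rkc; rewrite IHm ltnNge le_m_rkc.
case: (ltngtP (rk i) m) => [lt_im | gt_im | eq_im].
- rewrite source_old ?ltn_eqF // IHm (ifT _ _ lt_im) (ifT _ _ (ltnW lt_im)).
  by case: ifP => // lt; rewrite source_old // ltn_eqF // (ltn_trans lt).
- have ge_im : rk i < m = false by rewrite ltnNge ltnW.
  have ge_im1 : rk i < m.+1 = false by rewrite ltnS leqNgt gt_im.
  by rewrite source_old ?gtn_eqF // IHm (ifF _ _ ge_im) (ifF _ _ ge_im1).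
- rewrite sourceS /block_source inE eq_im eqxx ifT //; case: ltnP => [lt | ge].
    by rewrite source_old ?ltn_eqF.
  exact: source_late.
Qed.

Definition block_index D i : nat := find (fun B => i \in B) D.

Definition labels D : {set 'I_n} := [set i | block_index D (ordS i) < block_index D i].

Lemma block_index_lt_size D i : is_schedule D -> block_index D i < size D.
Proof.
case/and3P => _ _ /eqP cover; rewrite /block_index -has_find.
by have := in_setT i; rewrite -cover bigcup_seq => /bigcupP[B DB iB]; apply/hasP; exists B.
Qed.

Lemma mem_nth_schedule D i k :
  is_schedule D -> k < size D -> (i \in nth set0 D k) = (block_index D i == k).
Proof.
move=> schedD lt_k; have lt_idx := block_index_lt_size i schedD.
case/and3P: schedD => _ /(pairwiseP set0) disj _.
have i_in_idx : i \in nth set0 D (block_index D i).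
  by apply: (nth_find set0 (a := fun B => i \in B)); rewrite has_find.
apply/idP/eqP => [iDk|<- //]; case: (ltngtP (block_index D i) k) => // [lt_idx_k | lt_k_idx].
  by rewrite (disjointFr (disj _ _ lt_idx lt_k lt_idx_k) i_in_idx) in iDk.
by have := before_find set0 lt_k_idx; rewrite iDk.
Qed.

Lemma schedule_blocks D : is_schedule D -> D = blocks (block_index D) (size D).
Proof.
move=> schedD; apply: (@eq_from_nth _ set0); first by rewrite size_map size_iota.
move=> k lt_k; rewrite (nth_map 0) ?size_iota // nth_iota //.
by apply/setP => i; rewrite inE mem_nth_schedule.
Qed.

Lemma source_spec_schedule D : is_schedule D -> source_spec (labels D) (source D).
Proof.
move=> schedD i; rewrite (schedule_blocks schedD) source_blocks -schedule_blocks //.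
by rewrite block_index_lt_size // inE.
Qed.

Lemma labels_proper D : 0 < n -> is_schedule D -> labels D != setT.
Proof.
move=> n_gt0 schedD; pose i0 : 'I_n := Ordinal n_gt0.
case: (arg_minnP (block_index D) (isT : predT i0)) => j _ min_j.
by apply/eqP => /setP/(_ j); rewrite !inE ltnNge min_j.
Qed.

End Schedules.

Section Realization.

Variable n : nat.
Implicit Types (c i j : 'I_n) (S : {set 'I_n}) (D : seq {set 'I_n}).

Lemma source_drop_set0 D i : source [seq B <- D | B != set0] i = source D i.
Proof.
elim: D => [//|B D IHD] /=; case: eqP => [->|_] /=; rewrite IHD //.
by rewrite /block_source inE.
Qed.

Lemma is_schedule_blocks (rk : 'I_n -> nat) m :
  (forall c, rk c < m) -> is_schedule [seq B <- blocks rk m | B != set0].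
Proof.
move=> rk_lt; apply/and3P; split.
- exact: filter_all.
- apply/pairwise_filter; rewrite pairwise_map.
  apply: (sub_pairwise (r := [rel k l | k != l])); last by rewrite -uniq_pairwise iota_uniq.
  move=> k l /= neq_kl; rewrite -setI_eq0; apply/eqP/setP => c; rewrite !inE.
  by case: (eqVneq (rk c) k) => // ->; rewrite (negbTE neq_kl).
- apply/eqP/setP => c; rewrite inE bigcup_seq; apply/bigcupP.
  exists [set c' | rk c' == rk c]; last by rewrite inE.
  rewrite mem_filter; apply/andP; split; first by apply/set0Pn; exists c; rewrite inE.
  by apply: map_f; rewrite mem_iota rk_lt.
Qed.

Definition arc_count S j c : nat := count (mem S) (traject (@ordS n) c (fwd_dist c j)).

Lemma arc_count_lt S j c : arc_count S j c < n.
Proof. by apply: leq_ltn_trans (count_size _ _) _; rewrite size_traject fwd_dist_lt. Qed.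

Lemma arc_count_ordS S j i :
  j \notin S -> (arc_count S j (ordS i) < arc_count S j i) = (i \in S).
Proof.
move=> notSj; rewrite /arc_count; case: (eqVneq i j) => [->|neq_ij].
  by rewrite (negbTE notSj) /fwd_dist leqnn subnn.
by rewrite (fwd_distS neq_ij) trajectS /=; case: (i \in S); rewrite ?add1n ?add0n ?ltnSn ?ltnn.
Qed.

Lemma source_spec_realizable S :
  S != setT -> exists2 D, is_schedule D & source_spec S (source D).
Proof.
case/exists_notin => j notSj; pose rk := arc_count S j.
exists [seq B <- blocks rk n | B != set0]; first exact/is_schedule_blocks/arc_count_lt.
move=> i; rewrite !source_drop_set0 source_blocks arc_count_lt arc_count_ordS //.
Qed.

End Realization.

Section Counting.

Variable n : nat.
Hypothesis n_gt0 : 0 < n.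

Lemma dyn_setP g : reflect (exists2 D, is_schedule D & g = dynamics D) (g \in dyn_set n).
Proof.
by rewrite inE; apply: (iffP (asboolP _)) => [[D [schedD ->]] | [D schedD ->]]; exists D.
Qed.

Lemma dyn_labels_schedule (D : seq {set 'I_n}) :
  is_schedule D -> dyn_labels (dynamics D) = labels D.
Proof.
move=> schedD.
exact: dyn_labels_source_spec (labels_proper n_gt0 schedD) (source_spec_schedule schedD).
Qed.

Lemma dyn_labels_inj : {in dyn_set n &, injective (@dyn_labels n)}.
Proof.
move=> _ _ /dyn_setP[D schedD ->] /dyn_setP[D' schedD' ->].
rewrite !dyn_labels_schedule // => eq_labels; apply: dynamics_source.
apply: (source_spec_uniq (labels_proper n_gt0 schedD)); first exact: source_spec_schedule.
by rewrite eq_labels; apply: source_spec_schedule.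
Qed.

Lemma dyn_labels_image : @dyn_labels n @: dyn_set n = [set~ setT].
Proof.
apply/setP => S; rewrite !inE; apply/imsetP/idP => [[_ /dyn_setP[D schedD ->] ->] | properS].
  by rewrite dyn_labels_schedule ?labels_proper.
have [D schedD srcD] := source_spec_realizable properS.
by exists (dynamics D); [apply/dyn_setP; exists D | rewrite (dyn_labels_source_spec properS srcD)].
Qed.

Lemma card_dyn_set : #|dyn_set n| = 2 ^ n - 1.
Proof.
rewrite -(card_in_imset dyn_labels_inj) dyn_labels_image cardsC1.
by rewrite -cardsT -powersetT card_powerset cardsT card_ord subn1.
Qed.

End Counting.

Theorem mainTheorem3 (n : nat) (hn : 2 <= n) :
  mu170 n = (((2 ^ n)%:R - 1) / ((3 ^ n)%:R - (2 ^ n.+1)%:R + 2))%R.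
Proof. by rewrite /mu170 card_dyn_set ?(ltnW hn) // GRing.natrB ?expn_gt0. Qed.
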